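(* Let $\varepsilon\in\{-1,1\}$, $\nu>0$ and let $l$ be a non-negative integer. Then there is $C>0$ such that $$\|\partial_x^l K(\cdot,\cdot,t)\|_{L^\infty(\mathbb{R}^2)}\le C t^{-\frac54-\frac l2},\qquad t>0 .$$
   Context: $K(x,y,t):=t^{-5/4}K_*(xt^{-1/2},yt^{-3/4})$ for $(x,y)\in\mathbb{R}^2$, $t>0$, where $$K_*(x,y):=\frac{1}{4\pi^{3/2}\nu^{3/4}}\int_0^\infty r^{-1/4}e^{-r}\cos\Big(x\sqrt{\tfrac{r}{\nu}}+\frac{y^2}{4\varepsilon}\sqrt{\tfrac{r}{\nu}}-\frac{\pi}{4}\varepsilon\Big)\,dr .$$ *)

From Stdlib Require Import Reals.
From Coquelicot Require Import Coquelicot.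
Open Scope R_scope.

Definition Kstar_integrand (eps nu x y : R) (r : R) : R :=
  Rpower r (-1/4) * exp (- r) *
  cos (x * sqrt (r / nu) + y ^ 2 / (4 * eps) * sqrt (r / nu) - PI / 4 * eps).

Definition Kstar (eps nu x y : R) : R :=
  / (4 * Rpower PI (3/2) * Rpower nu (3/4)) *
  RInt_gen (Kstar_integrand eps nu x y) (at_right 0) (Rbar_locally p_infty).

Definition K (eps nu x y t : R) : R :=
  Rpower t (-5/4) * Kstar eps nu (x * Rpower t (-1/2)) (y * Rpower t (-3/4)).

(* Write [a r = sqrt (r / nu)] and [w r = r^(-1/4) e^(-r)].  Then [K_*(x, y)] is, up to a
   constant, [∫_0^∞ w(r) cos (u a(r) + θ) dr] with [u = x + y^2/(4 eps)], and [K] is [t^(-5/4)]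
   times this integral at [u = x t^(-1/2) + (y t^(-3/4))^2/(4 eps)].  Differentiating in [u]
   under the integral sign multiplies the integrand by [a(r)] and shifts the phase by [π/2]; this
   is justified because every moment [∫ w a^k] is finite, the second-order Taylor remainder of
   the cosine being dominated by the moment of order [k + 2].  Hence [∂_x^l K] is
   [t^(-5/4 - l/2)] times an oscillatory integral bounded by the [l]-th moment.  The moments are
   finite by comparison with [e^(-sqrt r)/sqrt r], whose primitive [-2 e^(-sqrt r)] has limits
   at [0+] and [+∞]. *)

From Stdlib Require Import Reals Lra FunctionalExtensionality.
From Coquelicot Require Import Coquelicot.
Open Scope R_scope.

Lemma eventually_0_lt_le :
  filter_prod (at_right 0) (Rbar_locally p_infty) (fun ab : R * R => 0 < fst ab <= snd ab).
Proof.
  apply (Filter_prod _ _ _ (fun a => 0 < a < 1) (fun b => 1 < b)).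
  - exists (mkposreal 1 Rlt_0_1); intros a Ha Ha0; split; [exact Ha0|].
    apply Rabs_lt_between in Ha; unfold minus, plus, opp in Ha; simpl in Ha; lra.
  - now exists 1.
  - intros a b Ha Hb; simpl; lra.
Qed.

Lemma ex_RInt_continuous_pos (f : R -> R) (a b : R) :
  (forall r, 0 < r -> continuous f r) -> 0 < a -> 0 < b -> ex_RInt f a b.
Proof.
  intros Hf Ha Hb; apply (ex_RInt_continuous (V := R_CompleteNormedModule)).
  intros r Hr; apply Hf.
  destruct (Rle_dec a b); [rewrite Rmin_left in Hr | rewrite Rmin_right in Hr]; lra.
Qed.

Lemma abs_RInt_le_abs_RInt (f g : R -> R) (a b : R) :
  ex_RInt f a b -> ex_RInt g a b ->
  (forall r, Rmin a b <= r <= Rmax a b -> Rabs (f r) <= g r) ->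
  Rabs (RInt f a b) <= Rabs (RInt g a b).
Proof.
  assert (ordered : forall a b, a <= b -> ex_RInt f a b -> ex_RInt g a b ->
    (forall r, a <= r <= b -> Rabs (f r) <= g r) -> Rabs (RInt f a b) <= Rabs (RInt g a b)).
  { intros a' b' Hab Hf Hg Hfg; eapply Rle_trans; [|apply Rle_abs].
    apply (norm_RInt_le f g a' b'); auto; now apply (RInt_correct (V := R_CompleteNormedModule)). }
  intros Hf Hg Hfg; destruct (Rle_dec a b) as [Hab | Hba].
  - rewrite Rmin_left, Rmax_right in Hfg by exact Hab; now apply ordered.
  - rewrite Rmin_right, Rmax_left in Hfg by lra.
    rewrite <- (opp_RInt_swap f b a), <- (opp_RInt_swap g b a) by now apply ex_RInt_swap.
    change (Rabs (- RInt f b a) <= Rabs (- RInt g b a)); rewrite !Rabs_Ropp.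
    apply ordered; auto using ex_RInt_swap; lra.
Qed.

Lemma is_RInt_gen_of_lim (f : R -> R) (Fa Fb : (R -> Prop) -> Prop)
    (I : R * R -> R) (l : R) :
  Filter Fa -> Filter Fb ->
  filter_prod Fa Fb (fun ab => is_RInt f (fst ab) (snd ab) (I ab)) ->
  filterlim I (filter_prod Fa Fb) (locally l) ->
  is_RInt_gen f Fa Fb l.
Proof.
  intros FFa FFb HI Hl P HP; unfold filtermapi.
  apply (filter_imp (fun ab => is_RInt f (fst ab) (snd ab) (I ab) /\ P (I ab))).
  - intros ab [HIab HPab]; now exists (I ab).
  - apply filter_and; [exact HI | now apply Hl].
Qed.

Lemma abs_RInt_sub_le (f g : R -> R) (a b a' b' : R) :
  (forall r, 0 < r -> continuous f r) -> (forall r, 0 < r -> continuous g r) ->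
  (forall r, 0 < r -> Rabs (f r) <= g r) ->
  0 < a -> 0 < b -> 0 < a' -> 0 < b' ->
  Rabs (RInt f a' b' - RInt f a b)
  <= Rabs (RInt g a' b - RInt g a b) + Rabs (RInt g a b' - RInt g a b).
Proof.
  intros Hf Hg Hfg Ha Hb Ha' Hb'.
  pose proof (fun c d => ex_RInt_continuous_pos f c d Hf) as exf.
  pose proof (fun c d => ex_RInt_continuous_pos g c d Hg) as exg.
  assert (compare : forall c d, 0 < c -> 0 < d -> Rabs (RInt f c d) <= Rabs (RInt g c d)).
  { intros c d Hc Hd; apply abs_RInt_le_abs_RInt; auto.
    intros r Hr; apply Hfg, Rlt_le_trans with (2 := proj1 Hr); now apply Rmin_glb_lt. }
  pose proof (RInt_Chasles f a' a b' (exf _ _ Ha' Ha) (exf _ _ Ha Hb')) as chasles_f1.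
  pose proof (RInt_Chasles f a b b' (exf _ _ Ha Hb) (exf _ _ Hb Hb')) as chasles_f2.
  pose proof (RInt_Chasles g a' a b (exg _ _ Ha' Ha) (exg _ _ Ha Hb)) as chasles_g1.
  pose proof (RInt_Chasles g a b b' (exg _ _ Ha Hb) (exg _ _ Hb Hb')) as chasles_g2.
  unfold plus in *; simpl in *.
  replace (RInt f a' b' - RInt f a b) with (RInt f a' a + RInt f b b') by lra.
  replace (RInt g a' b - RInt g a b) with (RInt g a' a) by lra.
  replace (RInt g a b' - RInt g a b) with (RInt g b b') by lra.
  eapply Rle_trans; [apply Rabs_triang | apply Rplus_le_compat; auto].
Qed.

(* Through the Cauchy criterion: by [abs_RInt_sub_le], the oscillation of
   [∫_a^b f] is controlled by that of [∫_a^b g], which converges. *)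
Lemma ex_RInt_gen_le (f g : R -> R) :
  (forall r, 0 < r -> continuous f r) -> (forall r, 0 < r -> continuous g r) ->
  (forall r, 0 < r -> Rabs (f r) <= g r) ->
  ex_RInt_gen g (at_right 0) (Rbar_locally p_infty) ->
  ex_RInt_gen f (at_right 0) (Rbar_locally p_infty).
Proof.
  intros Hf Hg Hfg [L HL].
  assert (cauchy : exists l, filterlim (fun ab : R * R => RInt f (fst ab) (snd ab))
             (filter_prod (at_right 0) (Rbar_locally p_infty)) (locally l)).
  { apply (filterlim_locally_cauchy (U := R_CompleteSpace)); intros eps.
    assert (Heps4 : 0 < eps / 4) by (destruct eps; simpl; lra).
    destruct (filter_and _ _ eventually_0_lt_le (HL _ (locally_ball L (mkposreal _ Heps4))))
      as [Qa Qb HQa HQb HQ].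
    exists (fun ab => Qa (fst ab) /\ Qb (snd ab)); split.
    { now apply (Filter_prod _ _ _ Qa Qb). }
    assert (Hpos : forall a b, Qa a -> Qb b -> 0 < a /\ 0 < b).
    { intros a b Ha Hb; destruct (HQ a b Ha Hb) as [Hab _]; simpl in Hab; lra. }
    assert (near_L : forall a b, Qa a -> Qb b -> Rabs (RInt g a b - L) < eps / 4).
    { intros a b Ha Hb; destruct (HQ a b Ha Hb) as [_ [y [Hy HyL]]]; simpl in Hy.
      rewrite (is_RInt_unique _ _ _ _ Hy); exact HyL. }
    assert (close : forall a b a' b', Qa a -> Qb b -> Qa a' -> Qb b' ->
      Rabs (RInt g a' b' - RInt g a b) < eps / 2).
    { intros a b a' b' Ha Hb Ha' Hb'.
      pose proof (near_L a b Ha Hb) as near1; pose proof (near_L a' b' Ha' Hb') as near2.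
      apply Rabs_def2 in near1; apply Rabs_def2 in near2; apply Rabs_def1; lra. }
    intros [a b] [a' b'] [Ha Hb] [Ha' Hb']; simpl in *.
    destruct (Hpos a b Ha Hb) as [Ha0 Hb0], (Hpos a' b' Ha' Hb') as [Ha'0 Hb'0].
    change (Rabs (RInt f a' b' - RInt f a b) < eps).
    eapply Rle_lt_trans; [exact (abs_RInt_sub_le f g a b a' b' Hf Hg Hfg Ha0 Hb0 Ha'0 Hb'0)|].
    pose proof (close a b a' b Ha Hb Ha' Hb); pose proof (close a b a b' Ha Hb Ha Hb'); lra. }
  destruct cauchy as [l Hl]; exists l.
  apply (is_RInt_gen_of_lim f _ _ (fun ab => RInt f (fst ab) (snd ab)));
    [apply _ | apply _ | | exact Hl].
  apply (filter_imp (fun ab : R * R => 0 < fst ab <= snd ab)); [|exact eventually_0_lt_le].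
  intros ab Hab; apply (RInt_correct (V := R_CompleteNormedModule)), ex_RInt_continuous_pos;
    auto; lra.
Qed.

Lemma is_derive_exp_sqrt (r : R) : 0 < r ->
  is_derive (fun r => -2 * exp (- sqrt r)) r (exp (- sqrt r) / sqrt r).
Proof.
  intros Hr; assert (0 < sqrt r) by now apply sqrt_lt_R0.
  auto_derive; [exact Hr | field; lra].
Qed.

Lemma is_RInt_gen_exp_sqrt :
  is_RInt_gen (fun r => exp (- sqrt r) / sqrt r) (at_right 0) (Rbar_locally p_infty) 2.
Proof.
  set (H := fun r => -2 * exp (- sqrt r)).
  assert (DH : forall r, 0 < r -> Derive H r = exp (- sqrt r) / sqrt r).
  { intros r Hr; now apply is_derive_unique, is_derive_exp_sqrt. }
  assert (in_range : forall ab : R * R, 0 < fst ab <= snd ab ->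
    forall r, Rmin (fst ab) (snd ab) <= r <= Rmax (fst ab) (snd ab) -> 0 < r).
  { intros ab Hab r Hr; rewrite Rmin_left in Hr; lra. }
  apply (is_RInt_gen_ext (Derive H)).
  { apply (filter_imp (fun ab : R * R => 0 < fst ab <= snd ab)); [|exact eventually_0_lt_le].
    intros ab Hab r Hr; apply DH, (in_range ab Hab); lra. }
  replace 2 with (0 - -2) by ring.
  apply is_RInt_gen_Derive.
  - apply (filter_imp (fun ab : R * R => 0 < fst ab <= snd ab)); [|exact eventually_0_lt_le].
    intros ab Hab r Hr; eexists; apply is_derive_exp_sqrt, (in_range ab Hab r Hr).
  - apply (filter_imp (fun ab : R * R => 0 < fst ab <= snd ab)); [|exact eventually_0_lt_le].
    intros ab Hab r Hr; pose proof (in_range ab Hab r Hr) as Hr0.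
    apply (continuous_ext_loc _ (fun r => exp (- sqrt r) / sqrt r)).
    + apply (filter_imp (fun u => 0 < u)); [intros u Hu; symmetry; now apply DH|].
      now apply open_gt.
    + apply (ex_derive_continuous (K := R_AbsRing) (V := R_NormedModule)).
      assert (0 < sqrt r) by now apply sqrt_lt_R0.
      auto_derive; repeat split; lra.
  - apply (filterlim_filter_le_1 (F := locally 0)); [apply filter_le_within|].
    replace (-2) with (H 0) by (unfold H; rewrite sqrt_0, Ropp_0, exp_0; ring).
    apply (continuous_comp sqrt (fun s => -2 * exp (- s))); [apply continuous_sqrt|].
    apply (ex_derive_continuous (K := R_AbsRing) (V := R_NormedModule)); auto_derive; auto.
  - change (is_lim H p_infty 0).
    apply (is_lim_comp (fun s => -2 * exp (- s)) sqrt p_infty 0 p_infty).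
    + replace (Finite 0) with (Rbar_mult (-2) 0) by (simpl; f_equal; ring).
      apply is_lim_scal_l, (is_lim_comp exp (fun s => - s) p_infty 0 m_infty).
      * exact is_lim_exp_m.
      * apply (is_lim_opp (fun s => s) p_infty p_infty), is_lim_id.
      * now exists 0.
    + apply is_lim_sqrt_p, is_lim_id.
    + now exists 0.
Qed.

Lemma exp_le_exp (x y : R) : x <= y -> exp x <= exp y.
Proof. intros [Hxy | ->]; [now left; apply exp_increasing | apply Rle_refl]. Qed.

Lemma one_plus_pow_le_exp (y : R) (n : nat) : 0 <= y -> (1 + y) ^ n <= exp (INR n * y).
Proof.
  intros Hy; induction n as [|n IH].
  - simpl; rewrite Rmult_0_l, exp_0; lra.
  - change ((1 + y) ^ S n) with ((1 + y) * (1 + y) ^ n).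
    rewrite S_INR, (Rmult_plus_distr_r (INR n) 1 y), Rmult_1_l, exp_plus, Rmult_comm.
    apply Rmult_le_compat; [apply pow_le; lra | lra | exact IH | apply exp_ineq1_le].
Qed.

Lemma sqrt_le_1_plus (x : R) : 0 <= x -> sqrt x <= 1 + x.
Proof. intros Hx; rewrite <- (sqrt_pow2 (1 + x)) by lra; apply sqrt_le_1_alt; nra. Qed.

Lemma Rabs_sin_sub_le (x y : R) : Rabs (sin y - sin x) <= Rabs (y - x).
Proof.
  destruct (MVT_cor4 sin cos x (Rabs (y - x)) (fun c _ => is_derive_sin c) y (Rle_refl _))
    as [c [Hc _]].
  rewrite Hc, Rabs_mult; pose proof (Rabs_pos (y - x)).
  assert (Rabs (cos c) <= 1) by (apply Rabs_le, COS_bound).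
  nra.
Qed.

Lemma Rabs_cos_taylor1_le (z d : R) : Rabs (cos (z + d) - cos z + d * sin z) <= d ^ 2.
Proof.
  destruct (MVT_cor4 (fun s => cos (z + s) + s * sin z) (fun s => sin z - sin (z + s))
              0 (Rabs d)) with (b := d) as [c [Hc Hcd]].
  - intros c _; auto_derive; [easy | ring].
  - rewrite Rminus_0_r; apply Rle_refl.
  - rewrite Rplus_0_r, Rmult_0_l, Rplus_0_r, !Rminus_0_r in *.
    replace (cos (z + d) - cos z + d * sin z) with ((sin z - sin (z + c)) * d) by lra.
    rewrite Rabs_mult.
    pose proof (Rabs_sin_sub_le (z + c) z) as Hsin.
    replace (z - (z + c)) with (- c) in Hsin by ring; rewrite Rabs_Ropp in Hsin.
    replace (d ^ 2) with (Rabs d * Rabs d) by (rewrite <- Rabs_mult, Rabs_right; nra).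
    apply Rmult_le_compat_r; [apply Rabs_pos | lra].
Qed.

Lemma is_derive_of_quadratic_remainder (f : R -> R) (u l M : R) :
  (forall h, Rabs (f (u + h) - f u - h * l) <= M * h ^ 2) -> is_derive f u l.
Proof.
  intros Hrem; apply is_derive_Reals; intros eps Heps.
  pose proof (Rabs_pos M) as HM.
  assert (Hdelta : 0 < eps / (Rabs M + 1)) by (apply Rdiv_lt_0_compat; lra).
  exists (mkposreal _ Hdelta); intros h Hh0 Hh; simpl in Hh.
  assert (Hh' : 0 < Rabs h) by now apply Rabs_pos_lt.
  replace ((f (u + h) - f u) / h - l) with ((f (u + h) - f u - h * l) / h) by (field; exact Hh0).
  unfold Rdiv; rewrite Rabs_mult, Rabs_inv.
  apply (Rmult_lt_reg_r (Rabs h)); [exact Hh'|].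
  rewrite Rmult_assoc, Rinv_l, Rmult_1_r by lra.
  apply Rle_lt_trans with (1 := Hrem h).
  replace (h ^ 2) with (Rabs h * Rabs h) by (rewrite <- Rabs_mult, Rabs_right; nra).
  assert (Rabs h * (Rabs M + 1) < eps).
  { apply (Rmult_lt_compat_r (Rabs M + 1)) in Hh; [|lra].
    unfold Rdiv in Hh; rewrite Rmult_assoc, Rinv_l, Rmult_1_r in Hh by lra.
    exact Hh. }
  pose proof (Rle_abs M); nra.
Qed.

Section OscillatoryIntegral.

Variables w a : R -> R.
Hypothesis w_ge0 : forall r, 0 <= w r.
Hypothesis a_ge0 : forall r, 0 <= a r.
Hypothesis w_cont : forall r, 0 < r -> continuous w r.
Hypothesis a_cont : forall r, 0 < r -> continuous a r.
Hypothesis ex_moment :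
  forall k, ex_RInt_gen (fun r => w r * a r ^ k) (at_right 0) (Rbar_locally p_infty).

Definition moment (k : nat) : R :=
  RInt_gen (fun r => w r * a r ^ k) (at_right 0) (Rbar_locally p_infty).

Definition osc (k : nat) (th u : R) : R :=
  RInt_gen (fun r => w r * a r ^ k * cos (u * a r + th)) (at_right 0) (Rbar_locally p_infty).

Lemma continuous_moment_integrand (k : nat) (r : R) :
  0 < r -> continuous (fun r => w r * a r ^ k) r.
Proof.
  intros Hr; apply (continuous_mult w (fun r => a r ^ k)); [now apply w_cont|].
  apply (continuous_comp a (fun y => y ^ k)); [now apply a_cont|].
  apply (ex_derive_continuous (K := R_AbsRing) (V := R_NormedModule)); auto_derive; easy.
Qed.

Lemma continuous_osc_integrand (k : nat) (th u r : R) :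
  0 < r -> continuous (fun r => w r * a r ^ k * cos (u * a r + th)) r.
Proof.
  intros Hr; apply (continuous_mult (fun r => w r * a r ^ k) (fun r => cos (u * a r + th))).
  - now apply continuous_moment_integrand.
  - apply (continuous_comp a (fun y => cos (u * y + th))); [now apply a_cont|].
    apply (ex_derive_continuous (K := R_AbsRing) (V := R_NormedModule)); auto_derive; easy.
Qed.

Lemma Rabs_osc_integrand_le (k : nat) (th u r : R) :
  Rabs (w r * a r ^ k * cos (u * a r + th)) <= w r * a r ^ k.
Proof.
  assert (Hnonneg : 0 <= w r * a r ^ k)
    by (apply Rmult_le_pos; [apply w_ge0 | apply pow_le, a_ge0]).
  rewrite Rabs_mult, (Rabs_pos_eq (w r * a r ^ k)) by exact Hnonneg.
  assert (Rabs (cos (u * a r + th)) <= 1) by (apply Rabs_le, COS_bound).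
  nra.
Qed.

Lemma ex_osc (k : nat) (th u : R) :
  ex_RInt_gen (fun r => w r * a r ^ k * cos (u * a r + th)) (at_right 0) (Rbar_locally p_infty).
Proof.
  apply (ex_RInt_gen_le _ (fun r => w r * a r ^ k)); auto.
  - intros r Hr; now apply continuous_osc_integrand.
  - intros r Hr; now apply continuous_moment_integrand.
  - intros r _; apply Rabs_osc_integrand_le.
Qed.

Lemma Rabs_osc_le (k : nat) (th u : R) : Rabs (osc k th u) <= moment k.
Proof.
  apply (RInt_gen_norm (V := R_CompleteNormedModule)
           (Fa := at_right 0) (Fb := Rbar_locally p_infty)
           (fun r => w r * a r ^ k * cos (u * a r + th)) (fun r => w r * a r ^ k)).
  - apply (filter_imp (fun ab : R * R => 0 < fst ab <= snd ab)); [easy | exact eventually_0_lt_le].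
  - apply filter_forall; intros ab r _; apply Rabs_osc_integrand_le.
  - apply (RInt_gen_correct (V := R_CompleteNormedModule)), ex_osc.
  - apply (RInt_gen_correct (V := R_CompleteNormedModule)), ex_moment.
Qed.

Lemma osc_integrand_taylor (k : nat) (th u h r : R) :
  Rabs (w r * a r ^ k * cos ((u + h) * a r + th) - w r * a r ^ k * cos (u * a r + th)
        - h * (w r * a r ^ S k * cos (u * a r + (th + PI / 2))))
  <= h ^ 2 * (w r * a r ^ S (S k)).
Proof.
  set (z := u * a r + th).
  replace ((u + h) * a r + th) with (z + h * a r) by (unfold z; ring).
  replace (u * a r + (th + PI / 2)) with (z + PI / 2) by (unfold z; ring).
  replace (cos (z + PI / 2)) with (- sin z) by (rewrite cos_plus, cos_PI2, sin_PI2; ring).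
  replace (w r * a r ^ k * cos (z + h * a r) - w r * a r ^ k * cos z
           - h * (w r * a r ^ S k * - sin z))
    with ((w r * a r ^ k) * (cos (z + h * a r) - cos z + h * a r * sin z)) by (simpl; ring).
  replace (h ^ 2 * (w r * a r ^ S (S k))) with ((w r * a r ^ k) * (h * a r) ^ 2) by (simpl; ring).
  assert (Hnonneg : 0 <= w r * a r ^ k)
    by (apply Rmult_le_pos; [apply w_ge0 | apply pow_le, a_ge0]).
  rewrite Rabs_mult, (Rabs_pos_eq (w r * a r ^ k)) by exact Hnonneg.
  apply Rmult_le_compat_l; [exact Hnonneg | apply Rabs_cos_taylor1_le].
Qed.

Lemma osc_taylor (k : nat) (th u h : R) :
  Rabs (osc k th (u + h) - osc k th u - h * osc (S k) (th + PI / 2) u)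
  <= moment (S (S k)) * h ^ 2.
Proof.
  pose proof (fun k th u => RInt_gen_correct (V := R_CompleteNormedModule) _ (ex_osc k th u))
    as Hosc.
  pose proof (is_RInt_gen_scal _ (h ^ 2) _
    (RInt_gen_correct (V := R_CompleteNormedModule) _ (ex_moment (S (S k))))) as Hmoment.
  pose proof (is_RInt_gen_minus _ _ _ _
    (is_RInt_gen_minus _ _ _ _ (Hosc k th (u + h)) (Hosc k th u))
    (is_RInt_gen_scal _ h _ (Hosc (S k) (th + PI / 2) u))) as Hremainder.
  rewrite (Rmult_comm (moment (S (S k)))).
  refine (RInt_gen_norm _ _ _ _ _ _ Hremainder Hmoment).
  - apply (filter_imp (fun ab : R * R => 0 < fst ab <= snd ab)); [easy | exact eventually_0_lt_le].
  - apply filter_forall; intros ab r _; apply osc_integrand_taylor.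
Qed.

Lemma is_derive_osc (k : nat) (th u : R) :
  is_derive (osc k th) u (osc (S k) (th + PI / 2) u).
Proof. apply (is_derive_of_quadratic_remainder _ _ _ (moment (S (S k)))), osc_taylor. Qed.

Lemma Derive_n_osc_affine (n k : nat) (th s b x : R) :
  Derive_n (fun x => osc k th (x * s + b)) n x
  = s ^ n * osc (k + n) (th + INR n * (PI / 2)) (x * s + b).
Proof.
  revert x; induction n as [|n IH]; intros x; simpl Derive_n.
  - rewrite Nat.add_0_r; simpl; ring_simplify (th + 0 * (PI / 2)); ring.
  - rewrite (Derive_ext _ _ x IH); apply is_derive_unique.
    rewrite Nat.add_succ_r, S_INR.
    replace (th + (INR n + 1) * (PI / 2)) with (th + INR n * (PI / 2) + PI / 2) by ring.
    replace (s ^ S n * _)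
      with (s ^ n * (s * osc (S (k + n)) (th + INR n * (PI / 2) + PI / 2) (x * s + b)))
      by (simpl; ring).
    apply is_derive_scal.
    apply (is_derive_comp (osc (k + n) (th + INR n * (PI / 2))) (fun x => x * s + b));
      [apply is_derive_osc | auto_derive; [easy | ring]].
Qed.

End OscillatoryIntegral.

Definition Kweight (r : R) : R := Rpower r (-1/4) * exp (- r).
Definition Kfreq (nu r : R) : R := sqrt (r / nu).

Lemma Kfreq_pow_le (nu : R) (k : nat) (r : R) : 0 < nu -> 0 <= r ->
  Kfreq nu r ^ k <= (1 + 2 * (INR k + 1) / nu) ^ k * exp (r / 2).
Proof.
  intros Hnu Hr; unfold Kfreq.
  set (m := 2 * (INR k + 1)); assert (Hm : 0 < m) by (unfold m; pose proof (pos_INR k); lra).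
  assert (Hrnu : 0 <= r / nu) by (apply Rdiv_le_0_compat; lra).
  assert (Hrm : 0 <= r / m) by (apply Rdiv_le_0_compat; lra).
  assert (Hmnu : 0 <= m / nu) by (apply Rdiv_le_0_compat; lra).
  assert (Hsplit : 1 + r / nu <= (1 + m / nu) * (1 + r / m)).
  { replace (r / nu) with (m / nu * (r / m)) at 1 by (field; lra); nra. }
  eapply Rle_trans.
  { apply pow_incr; split; [apply sqrt_pos|].
    eapply Rle_trans; [apply sqrt_le_1_plus; exact Hrnu | exact Hsplit]. }
  rewrite Rpow_mult_distr; apply Rmult_le_compat_l; [apply pow_le; lra|].
  eapply Rle_trans; [now apply one_plus_pow_le_exp|].
  pose proof (pos_INR k); apply exp_le_exp; unfold m.
  apply (Rmult_le_reg_r (2 * (INR k + 1))); [lra|].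
  replace (INR k * (r / (2 * (INR k + 1))) * (2 * (INR k + 1))) with (INR k * r) by (field; lra).
  nra.
Qed.

Lemma Kweight_ge0 (r : R) : 0 <= Kweight r.
Proof. unfold Kweight, Rpower; left; apply Rmult_lt_0_compat; apply exp_pos. Qed.

Lemma Kfreq_ge0 (nu r : R) : 0 <= Kfreq nu r.
Proof. apply sqrt_pos. Qed.

Lemma continuous_Kweight (r : R) : 0 < r -> continuous Kweight r.
Proof.
  intros Hr; apply (ex_derive_continuous (K := R_AbsRing) (V := R_NormedModule)).
  unfold Kweight, Rpower; auto_derive; exact Hr.
Qed.

Lemma continuous_Kfreq (nu : R) : 0 < nu -> forall r, 0 < r -> continuous (Kfreq nu) r.
Proof.
  intros Hnu r Hr; apply (ex_derive_continuous (K := R_AbsRing) (V := R_NormedModule)).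
  unfold Kfreq; auto_derive; apply Rdiv_lt_0_compat; assumption.
Qed.

(* After multiplying by [sqrt r * e^(sqrt r)], everything is absorbed by [e^(-r)]:
   [r^(1/4) <= e^((r-1)/4)], [e^(sqrt r) <= e^(1 + r/4)] and [Kfreq_pow_le]. *)
Lemma Kweight_Kfreq_pow_le (nu : R) (k : nat) (r : R) : 0 < nu -> 0 < r ->
  Kweight r * Kfreq nu r ^ k
  <= exp 1 * (1 + 2 * (INR k + 1) / nu) ^ k * (exp (- sqrt r) / sqrt r).
Proof.
  intros Hnu Hr; set (L := 1 + 2 * (INR k + 1) / nu); set (s := sqrt r).
  assert (Hs0 : 0 < s) by now apply sqrt_lt_R0.
  assert (Hln : 1 + ln r <= r) by (rewrite <- (exp_ln r Hr) at 2; apply exp_ineq1_le).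
  assert (Hs : s <= 1 + r / 4).
  { pose proof (sqrt_sqrt r (Rlt_le _ _ Hr)) as Hss; fold s in Hss.
    pose proof (pow2_ge_0 (s - 2)); nra. }
  assert (Hdecay : Kweight r * (s * exp s) <= exp (1 - r / 2)).
  { unfold Kweight, Rpower.
    replace s with (exp (/ 2 * ln r)) at 1
      by (unfold s; rewrite <- Rpower_sqrt by exact Hr; reflexivity).
    rewrite <- !exp_plus; apply exp_le_exp; lra. }
  apply (Rmult_le_reg_r (s * exp s)); [apply Rmult_lt_0_compat; [exact Hs0 | apply exp_pos]|].
  replace (exp 1 * L ^ k * (exp (- s) / s) * (s * exp s))
    with (exp (1 - r / 2) * (L ^ k * exp (r / 2))).
  2: { replace (exp 1) with (exp (1 - r / 2) * exp (r / 2))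
         by (rewrite <- exp_plus; f_equal; ring).
       rewrite exp_Ropp; field; split; [apply exp_neq_0 | lra]. }
  replace (Kweight r * Kfreq nu r ^ k * (s * exp s))
    with (Kweight r * (s * exp s) * Kfreq nu r ^ k) by ring.
  apply Rmult_le_compat; [| apply pow_le, Kfreq_ge0 | exact Hdecay | now apply Kfreq_pow_le; lra].
  apply Rmult_le_pos; [apply Kweight_ge0|].
  left; apply Rmult_lt_0_compat; [exact Hs0 | apply exp_pos].
Qed.

Lemma ex_RInt_gen_Kmoment (nu : R) : 0 < nu -> forall k,
  ex_RInt_gen (fun r => Kweight r * Kfreq nu r ^ k) (at_right 0) (Rbar_locally p_infty).
Proof.
  intros Hnu k; set (C := exp 1 * (1 + 2 * (INR k + 1) / nu) ^ k).
  apply (ex_RInt_gen_le _ (fun r => C * (exp (- sqrt r) / sqrt r))).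
  - intros r Hr; apply (continuous_moment_integrand Kweight (Kfreq nu));
      [exact continuous_Kweight | exact (continuous_Kfreq nu Hnu) | exact Hr].
  - intros r Hr; apply (ex_derive_continuous (K := R_AbsRing) (V := R_NormedModule)).
    assert (0 < sqrt r) by now apply sqrt_lt_R0.
    auto_derive; repeat split; lra.
  - intros r Hr.
    rewrite Rabs_pos_eq by (apply Rmult_le_pos; [apply Kweight_ge0 | apply pow_le, Kfreq_ge0]).
    now apply Kweight_Kfreq_pow_le.
  - exists (scal C 2); apply (is_RInt_gen_scal (V := R_NormedModule)), is_RInt_gen_exp_sqrt.
Qed.

Lemma Kstar_eq_osc (eps nu x y : R) :
  Kstar eps nu x y
  = / (4 * Rpower PI (3/2) * Rpower nu (3/4))
    * osc Kweight (Kfreq nu) 0 (- (PI / 4 * eps)) (x + y ^ 2 / (4 * eps)).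
Proof.
  unfold Kstar, osc; do 2 f_equal; apply functional_extensionality; intros r.
  unfold Kstar_integrand, Kweight, Kfreq; rewrite pow_O, Rmult_1_r; f_equal; f_equal; ring.
Qed.

Lemma Derive_n_K (eps nu y t : R) (l : nat) (x : R) : 0 < nu ->
  Derive_n (fun x' => K eps nu x' y t) l x
  = Rpower t (-5/4) * Rpower t (-1/2) ^ l
    * (/ (4 * Rpower PI (3/2) * Rpower nu (3/4))
       * osc Kweight (Kfreq nu) l (- (PI / 4 * eps) + INR l * (PI / 2))
           (x * Rpower t (-1/2) + (y * Rpower t (-3/4)) ^ 2 / (4 * eps))).
Proof.
  intros Hnu.
  set (c := / (4 * Rpower PI (3/2) * Rpower nu (3/4))).
  set (s := Rpower t (-1/2)); set (b := (y * Rpower t (-3/4)) ^ 2 / (4 * eps)).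
  rewrite (Derive_n_ext _
    (fun x' => Rpower t (-5/4) * (c * osc Kweight (Kfreq nu) 0 (- (PI / 4 * eps)) (x' * s + b))))
    by (intros x'; unfold K; now rewrite Kstar_eq_osc).
  rewrite Derive_n_scal_l, Derive_n_scal_l.
  rewrite (Derive_n_osc_affine _ _ Kweight_ge0 (Kfreq_ge0 nu) continuous_Kweight
             (continuous_Kfreq nu Hnu) (ex_RInt_gen_Kmoment nu Hnu)), Nat.add_0_l.
  ring.
Qed.

Lemma Rpower_sub_half_mul (t s : R) (l : nat) : 0 < t ->
  Rpower t (s - INR l / 2) = Rpower t s * Rpower t (-1/2) ^ l.
Proof.
  intros Ht; rewrite <- Rpower_pow, Rpower_mult, <- Rpower_plus by (unfold Rpower; apply exp_pos).
  f_equal; field.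
Qed.

Theorem proposition2p3 (eps nu : R) (l : nat) :
  (eps = 1 \/ eps = -1) -> 0 < nu ->
  exists C : R, 0 < C /\
    forall t : R, 0 < t ->
      forall x y : R,
        Rabs (Derive_n (fun x' => K eps nu x' y t) l x)
          <= C * Rpower t (-5/4 - INR l / 2).
Proof.
  intros _ Hnu.
  set (c := / (4 * Rpower PI (3/2) * Rpower nu (3/4))).
  pose proof (Rabs_osc_le _ _ Kweight_ge0 (Kfreq_ge0 nu) continuous_Kweight
                (continuous_Kfreq nu Hnu) (ex_RInt_gen_Kmoment nu Hnu) l) as Kosc_le.
  exists (Rabs c * moment Kweight (Kfreq nu) l + 1); split.
  { pose proof (Rabs_pos c); pose proof (Rle_trans _ _ _ (Rabs_pos _) (Kosc_le 0 0)); nra. }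
  intros t Ht x y.
  rewrite Derive_n_K, Rpower_sub_half_mul by assumption; fold c.
  assert (Hscale : 0 < Rpower t (-5/4) * Rpower t (-1/2) ^ l).
  { apply Rmult_lt_0_compat; [|apply pow_lt]; unfold Rpower; apply exp_pos. }
  rewrite Rabs_mult, (Rabs_pos_eq _ (Rlt_le _ _ Hscale)),
    (Rmult_comm (Rabs c * moment Kweight (Kfreq nu) l + 1)).
  apply Rmult_le_compat_l; [lra|].
  rewrite Rabs_mult; apply Rle_trans with (Rabs c * moment Kweight (Kfreq nu) l); [|lra].
  apply Rmult_le_compat_l; [apply Rabs_pos | apply Kosc_le].
Qed.
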